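(* Let $q$ be a query program and $\mathcal{T}$ a theory, and for a partial model $P$ let $\mathit{DS}_P(P,\mathcal{T})=\max_{M\in\mathit{solutions}(P',\mathcal{T}')}g_{\mathrm{witness}}(M)$ denote the domain-specific WCET estimate of $q$ for $P$ and $\mathcal{T}$. If $P\succcurlyeq Q$, then $\mathit{DS}_P(Q,\mathcal{T})\le\mathit{DS}_P(P,\mathcal{T})$. In particular, if $P=P_{\mathrm{init}}$ is the initial partial model of the metamodel $\Sigma$, then for every partial model $Q$ with $P_{\mathrm{init}}\succcurlyeq Q$, $\mathit{DS}_P(Q,\mathcal{T})\le\mathit{DS}_P(P_{\mathrm{init}},\mathcal{T})$ (the latter being the metamodel-level estimate $\mathit{DS}_\Sigma$).
   Context: Linear systems. Fix a large finite reserve $\mathcal{X}$ of integer variables. A system of linear inequalities $\mathcal{S}$ is a finite set of inequalities $\sum_j a_{ij}x_j\le y_i$ (equations are written as pairs of inequalities). A valuation $k:\mathcal{X}\to\mathbb{Z}$ is a solution of $\mathcal{S}$ ($k\vDash\mathcal{S}$) if it satisfies all of them; $\mathcal{S}_1\vDash\mathcal{S}_2$ means every solution of $\mathcal{S}_1$ is a solution of $\mathcal{S}_2$. Models. A metamodel is a signature $\Sigma$ of unary class symbols, binary relation symbols, a unary existence symbol $\varepsilon$ and a binary equality symbol $\sim$. A (scoped) partial model $P=\langle O_P,I_P,\mathcal{S}_P\rangle$ consists of a finite object set $O_P$, a 3-valued interpretation $I_P(\sigma):O_P^{\mathrm{arity}(\sigma)}\to\{0,1,\tfrac12\}$ for each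 $\sigma\in\Sigma$ ($\tfrac12$ = unknown), and a scope $\mathcal{S}_P$ (a system of linear inequalities). $P$ is concrete if all values are $0$ or $1$, $I_P(\varepsilon)(o)=1$ for all $o$, $I_P(\sim)(o_1,o_2)=1$ iff $o_1=o_2$, and $\mathcal{S}_P$ has a solution. Refinement: for $\mathit{abs}:O_Q\to O_P$, $P\succcurlyeq_{\mathit{abs}}Q$ holds if for all $\sigma$ and tuples $\bar q$, $I_P(\sigma)(\mathit{abs}(\bar q))$ is $\tfrac12$ or equals $I_Q(\sigma)(\bar q)$; every $p$ with $I_P(\varepsilon)(p)=1$ has a preimage under $\mathit{abs}$; and $\mathcal{S}_Q\vDash\mathcal{S}_P$. $P\succcurlyeq Q$ if $P\succcurlyeq_{\mathit{abs}}Q$ for some $\mathit{abs}$. The initial partial model $P_{\mathrm{init}}$ of $\Sigma$ has a single object $\mathit{new}$ with $I(C)(\mathit{new})=I(R)(\mathit{new},\mathit{new})=I(\varepsilon)(\mathit{new})=I(\sim)(\mathit{new},\mathit{new})=\tfrac12$ for all class symbols $C$ and relation symbols $R$. For a first-order predicate $\varphi$ over $\Sigma$ with free variables $v_1,\dots,v_n$ and a concrete model $M$, $M\#\varphi$ is the number of maps $Z:\{v_1,\dots,v_n\}\to O_M$ under which $\varphi$ is true in $M$. A theory $\mathcal{T}=\langle\Phi,r\rangle$ is a finite set $\Phi$ of predicates with a map $r:\Phi\to\mathcal{X}$; a concrete $M$ is compatible with it ($M\vDash\mathcal{T}$) if $\mathcal{S}_M\vDash r(\varphi)=M\#\varphi$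 for all $\varphi\in\Phi$. $\mathit{solutions}(P,\mathcal{T})$ is the set of concrete models $M$ with $P\succcurlyeq M$ and $M\vDash\mathcal{T}$. Program and IPET. $q$ is a query program generated from a graph-query search plan: structured code of nested for-loops and if-statements, where each for-loop implements an extend constraint ($C(v)$ with $v$ new, or $R(v_i,v_j)$ with $v_j$ new) and each if-statement implements a check constraint ($C(v_i)$, $R(v_i,v_j)$, $v_i=v_j$, or their negations, over bound variables). $\mathit{BB}$ is its set of basic blocks; its weighted CFG is $\langle V,E,s,t,w,\mathit{tr}\rangle$ with edges $E\subseteq V\times V$, start/end $s,t$, weights $w:E\to\mathbb{N}$, traceability $\mathit{tr}:V\to\mathit{BB}$. $f:E\to\mathcal{X}$ assigns distinct variables to edges. $\mathcal{S}_{\mathrm{IPET}}$ contains $\sum_{e=\langle s,n\rangle}f(e)=1$, $\sum_{e=\langle n,t\rangle}f(e)=1$, flow conservation at every $n\ne s,t$, $-f(e)\le0$, and possibly further low-level flow facts. $g_{\mathrm{IPET}}(k)=\sum_{e\in E}w(e)k(f(e))$. Basic block predicates. For $bb\in\mathit{BB}$, $\psi_{bb}$ is the conjunction of the atomic predicates of all for/if statements enclosing $bb$ (extend atoms without their existential quantifier; check literals as-is); $\psi_{bb}=\mathrm{true}$ if none. If $bb$ is the header of loop $\ell$, also $\psi'_{bb}=\psi_{bb}\wedge(\text{atom of }\ell)$. $\Psi$ is the set of all these predicates. Witness generation. Given a partial model $P=\langle O_P,I_P,\mathcal{S}_P\rangle$ and $\mathcal{T}=\langle\Phi,r\rangle$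 (with the range of $f$ disjoint from the range of $r$ and from the variables of the scopes), extend $r$ to $r'$ on $\Phi\cup\Psi$ by assigning to each $\psi\in\Psi$ a fresh distinct variable (not in the range of $f$ or of $r$, and not in the scopes); this choice does not depend on $P$. $\mathcal{S}_{\mathrm{merge}}$ contains for each $bb$: $r'(\psi_{bb})+r'(\psi'_{bb})-\sum_{e=\langle n_1,n_2\rangle\in E,\mathit{tr}(n_1)=bb}f(e)=0$ if $bb$ is a loop header, else $r'(\psi_{bb})-\sum_{e=\langle n_1,n_2\rangle\in E,\mathit{tr}(n_1)=bb}f(e)=0$. Set $P'=\langle O_P,I_P,\mathcal{S}_P\cup\mathcal{S}_{\mathrm{IPET}}\cup\mathcal{S}_{\mathrm{merge}}\rangle$ and $\mathcal{T}'=\langle\Phi\cup\Psi,r'\rangle$ (and analogously $Q'$ for $Q$). For a concrete $M$, $g_{\mathrm{witness}}(M)=\max_{k\vDash\mathcal{S}_M}g_{\mathrm{IPET}}(k)$. *)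

From HB Require Import structures.
From mathcomp Require Import all_boot all_order all_algebra.
From mathcomp Require Import all_classical all_reals Rstruct.
From mathcomp Require Import ereal.
Set Implicit Arguments. Unset Strict Implicit. Unset Printing Implicit Defensive.
Import Order.TTheory GRing.Theory Num.Theory.
Local Open Scope ring_scope.

(* An inequality  sum_j a_j x_j <= y  is the pair (list of (a_j, x_j), y). *)
Definition ineq (X : Type) := (seq (int * X) * int)%type.
Definition lsys (X : Type) := seq (ineq X).

Definition sat_ineq (X : Type) (k : X -> int) (i : ineq X) : bool :=
  \sum_(p <- i.1) p.1 * k p.2 <= i.2.
Definition sat (X : Type) (k : X -> int) (S : lsys X) : Prop :=
  forall i, List.In i S -> sat_ineq k i.
Definition entails (X : Type) (S1 S2 : lsys X) : Prop :=
  forall k, sat k S1 -> sat k S2.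
Definition vars (X : Type) (S : lsys X) : seq X :=
  flatten [seq [seq p.2 | p <- i.1] | i <- S].
Definition eqn (X : Type) (lhs : seq (int * X)) (c : int) : lsys X :=
  [:: (lhs, c); ([seq (- p.1, p.2) | p <- lhs], - c)].

(* Metamodel Sigma: class symbols [C], relation symbols [R], plus the
   existence symbol epsilon (unary) and the equality symbol ~ (binary). *)
Inductive tv := T0 | T1 | Thalf.   (* 0, 1, 1/2 *)
Definition is1 (a : tv) : bool := if a is T1 then true else false.

Record pmodel (C R X : Type) := PModel {
  pm_n : nat;                                   (* O_P = 'I_pm_n *)
  pm_cls : C -> 'I_pm_n -> tv;
  pm_rel : R -> 'I_pm_n -> 'I_pm_n -> tv;
  pm_ex : 'I_pm_n -> tv;
  pm_eq : 'I_pm_n -> 'I_pm_n -> tv;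
  pm_scope : lsys X
}.
Arguments pm_n {C R X} p.
Arguments pm_cls {C R X} p _ _.
Arguments pm_rel {C R X} p _ _ _.
Arguments pm_ex {C R X} p _.
Arguments pm_eq {C R X} p _ _.
Arguments pm_scope {C R X} p.

Definition with_scope (C R X : Type) (P : pmodel C R X) (S : lsys X) :=
  @PModel C R X (pm_n P) (pm_cls P) (pm_rel P) (pm_ex P) (pm_eq P) S.

Definition concrete (C R X : Type) (P : pmodel C R X) : Prop :=
  [/\ (forall c o, pm_cls P c o <> Thalf),
      (forall r o1 o2, pm_rel P r o1 o2 <> Thalf),
      (forall o, pm_ex P o = T1),
      (forall o1 o2, pm_eq P o1 o2 = if o1 == o2 then T1 else T0)
    & (exists k, sat k (pm_scope P))].

Definition info_le (a b : tv) : Prop := a = Thalf \/ a = b.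

Definition refines_abs (C R X : Type) (P Q : pmodel C R X)
    (abs : 'I_(pm_n Q) -> 'I_(pm_n P)) : Prop :=
  [/\ (forall c q, info_le (pm_cls P c (abs q)) (pm_cls Q c q)),
      (forall r q1 q2, info_le (pm_rel P r (abs q1) (abs q2)) (pm_rel Q r q1 q2)),
      (forall q, info_le (pm_ex P (abs q)) (pm_ex Q q)),
      (forall q1 q2, info_le (pm_eq P (abs q1) (abs q2)) (pm_eq Q q1 q2))
    & (forall p, pm_ex P p = T1 -> exists q, abs q = p)] /\
  entails (pm_scope Q) (pm_scope P).

Definition refines (C R X : Type) (P Q : pmodel C R X) : Prop :=
  exists abs, @refines_abs C R X P Q abs.

Definition P_init (C R X : Type) : pmodel C R X :=
  @PModel C R X 1 (fun _ _ => Thalf) (fun _ _ _ => Thalf) (fun _ => Thalf)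
    (fun _ _ => Thalf) [::].

Inductive fol (C R : Type) :=
| FTrue | FFalse
| FCls of C & nat
| FRel of R & nat & nat
| FE of nat
| FSim of nat & nat
| FNot of fol C R
| FAnd of fol C R & fol C R
| FOr of fol C R & fol C R
| FExists of nat & fol C R
| FForall of nat & fol C R.
Arguments FTrue {C R}. Arguments FFalse {C R}.

Fixpoint fv (C R : Type) (phi : fol C R) : seq nat :=
  match phi with
  | FTrue | FFalse => [::]
  | FCls _ v | FE v => [:: v]
  | FRel _ v1 v2 | FSim v1 v2 => [:: v1; v2]
  | FNot p => fv p
  | FAnd p1 p2 | FOr p1 p2 => fv p1 ++ fv p2
  | FExists v p | FForall v p => [seq u <- fv p | u != v]
  end.

(* 2-valued evaluation in a (concrete) model, with a partial environment *)
Fixpoint eval (C R X : Type) (M : pmodel C R X) (env : nat -> option 'I_(pm_n M))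
    (phi : fol C R) {struct phi} : bool :=
  match phi with
  | FTrue => true
  | FFalse => false
  | FCls c v => if env v is Some o then is1 (pm_cls M c o) else false
  | FRel r v1 v2 =>
      if (env v1, env v2) is (Some o1, Some o2) then is1 (pm_rel M r o1 o2) else false
  | FE v => if env v is Some o then is1 (pm_ex M o) else false
  | FSim v1 v2 =>
      if (env v1, env v2) is (Some o1, Some o2) then is1 (pm_eq M o1 o2) else false
  | FNot p => ~~ eval env p
  | FAnd p1 p2 => eval env p1 && eval env p2
  | FOr p1 p2 => eval env p1 || eval env p2
  | FExists v p =>
      [exists o : 'I_(pm_n M), eval (fun u => if u == v then Some o else env u) p]
  | FForall v p =>
      [forall o : 'I_(pm_n M), eval (fun u => if u == v then Some o else env u) p]
  end.

(* M # phi : number of maps Z : fv(phi) -> O_M under which phi is true.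
   The free variables are enumerated (without repetition) by [undup (fv phi)]. *)
Definition count_matches (C R X : Type) (M : pmodel C R X) (phi : fol C R) : nat :=
  let vs := undup (fv phi) in
  #|[set Z : {ffun 'I_(size vs) -> 'I_(pm_n M)} |
      eval (fun u => omap Z (insub (index u vs))) phi]|.

Record theory (C R X : Type) := Theory {
  th_Phi : seq (fol C R);
  th_r : fol C R -> X
}.

Definition compatible (C R X : Type) (M : pmodel C R X) (T : theory C R X) : Prop :=
  forall phi, List.In phi (th_Phi T) ->
    forall k, sat k (pm_scope M) -> k (th_r T phi) = (count_matches M phi)%:Z.

Definition solutions (C R X : Type) (P : pmodel C R X) (T : theory C R X)
    : set (pmodel C R X) :=
  [set M | [/\ concrete M, refines P M & compatible M T]].

Inductive extend (C R : Type) :=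
| ExtC of C & nat            (* for v with C(v), v new *)
| ExtR of R & nat & nat.     (* for vj with R(vi, vj), vj new *)

Inductive check_atom (C R : Type) :=
| ChkC of C & nat
| ChkR of R & nat & nat
| ChkEq of nat & nat.

(* a check literal: (true, a) is a, (false, a) is its negation *)
Definition check_lit (C R : Type) := (bool * check_atom C R)%type.

(* QBlock b : straight-line basic block b
   QFor h a body : for-loop implementing extend constraint a, with header block h
   QIf l body : if-statement implementing check literal l *)
Inductive qprog (C R : Type) :=
| QBlock of nat
| QSeq of qprog C R & qprog C R
| QFor of nat & extend C R & qprog C R
| QIf of check_lit C R & qprog C R.

Fixpoint blocks (C R : Type) (q : qprog C R) : seq nat :=
  match q with
  | QBlock b => [:: b]
  | QSeq p1 p2 => blocks p1 ++ blocks p2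
  | QFor h _ body => h :: blocks body
  | QIf _ body => blocks body
  end.

Definition chk_vars (C R : Type) (a : check_atom C R) : seq nat :=
  match a with ChkC _ v => [:: v] | ChkR _ v1 v2 | ChkEq v1 v2 => [:: v1; v2] end.

(* well-formedness as code generated from a search plan: extend constraints
   bind a new variable (resp. extend from a bound one), checks only use bound
   variables; [bound] is the list of currently bound variables. *)
Fixpoint wf_qprog (C R : Type) (bound : seq nat) (q : qprog C R) : bool :=
  match q with
  | QBlock _ => true
  | QSeq p1 p2 => wf_qprog bound p1 && wf_qprog bound p2
  | QFor _ (ExtC _ v) body => (v \notin bound) && wf_qprog (v :: bound) body
  | QFor _ (ExtR _ vi vj) body =>
      [&& vi \in bound, vj \notin bound & wf_qprog (vj :: bound) body]
  | QIf l body => all (mem bound) (chk_vars l.2) && wf_qprog bound body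
  end.

Definition query_program (C R : Type) (q : qprog C R) : Prop :=
  wf_qprog [::] q /\ uniq (blocks q).

Definition extend_atom (C R : Type) (a : extend C R) : fol C R :=
  match a with ExtC c v => FCls R c v | ExtR r vi vj => FRel C r vi vj end.
Definition check_atom_form (C R : Type) (a : check_atom C R) : fol C R :=
  match a with
  | ChkC c v => FCls R c v
  | ChkR r vi vj => FRel C r vi vj
  | ChkEq vi vj => FSim C R vi vj
  end.
Definition check_lit_form (C R : Type) (l : check_lit C R) : fol C R :=
  if l.1 then check_atom_form l.2 else FNot (check_atom_form l.2).

Fixpoint conj_list (C R : Type) (l : seq (fol C R)) : fol C R :=
  match l with
  | [::] => FTrue
  | [:: a] => a
  | a :: l' => FAnd a (conj_list l')
  end.

(* For every basic block bb: (bb, psi_bb, Some psi'_bb if bb is a loop header).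
   [ctx] = atoms of the enclosing statements, outermost first. *)
Fixpoint bb_preds (C R : Type) (ctx : seq (fol C R)) (q : qprog C R)
    : seq (nat * fol C R * option (fol C R)) :=
  match q with
  | QBlock b => [:: (b, conj_list ctx, None)]
  | QSeq p1 p2 => bb_preds ctx p1 ++ bb_preds ctx p2
  | QFor h a body =>
      (h, conj_list ctx, Some (conj_list (rcons ctx (extend_atom a))))
        :: bb_preds (rcons ctx (extend_atom a)) body
  | QIf l body => bb_preds (rcons ctx (check_lit_form l)) body
  end.

Definition Psi (C R : Type) (q : qprog C R) : seq (fol C R) :=
  flatten [seq x.1.2 :: (if x.2 is Some p then [:: p] else [::])
          | x <- bb_preds [::] q].

Record wcfg := WCFG {
  cfg_V : finType;
  cfg_E : {set cfg_V * cfg_V};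
  cfg_s : cfg_V;
  cfg_t : cfg_V;
  cfg_w : cfg_V * cfg_V -> nat;
  cfg_tr : cfg_V -> nat            (* traceability into basic blocks *)
}.
Arguments cfg_E w : clear implicits.
Arguments cfg_s w : clear implicits.
Arguments cfg_t w : clear implicits.
Arguments cfg_w w _ : clear implicits.
Arguments cfg_tr w _ : clear implicits.

Definition edges (G : wcfg) : seq (cfg_V G * cfg_V G) := enum (cfg_E G).

(* S_IPET; [extra] = further low-level flow facts *)
Definition S_IPET (X : Type) (G : wcfg) (f : cfg_V G * cfg_V G -> X)
    (extra : lsys X) : lsys X :=
  eqn [seq (1, f e) | e <- edges G & e.1 == cfg_s G] 1
  ++ eqn [seq (1, f e) | e <- edges G & e.2 == cfg_t G] 1
  ++ flatten [seq eqn ([seq (1, f e) | e <- edges G & e.2 == n]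
                       ++ [seq (-1, f e) | e <- edges G & e.1 == n]) 0
             | n <- enum (cfg_V G) & (n != cfg_s G) && (n != cfg_t G)]
  ++ [seq ([:: (-1, f e)], 0) | e <- edges G]
  ++ extra.

Definition g_IPET (X : Type) (G : wcfg) (f : cfg_V G * cfg_V G -> X)
    (k : X -> int) : int :=
  \sum_(e <- edges G) (cfg_w G e)%:Z * k (f e).

Definition S_merge (C R X : Type) (q : qprog C R) (G : wcfg)
    (f : cfg_V G * cfg_V G -> X) (r' : fol C R -> X) : lsys X :=
  flatten [seq
    eqn ((1, r' x.1.2) :: (if x.2 is Some p then [:: (1, r' p)] else [::])
         ++ [seq (-1, f e) | e <- edges G & cfg_tr G e.1 == x.1.1]) 0
  | x <- bb_preds [::] q].

Definition P' (C R X : Type) (q : qprog C R) (G : wcfg)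
    (f : cfg_V G * cfg_V G -> X) (extra : lsys X) (r' : fol C R -> X)
    (P : pmodel C R X) : pmodel C R X :=
  with_scope P (pm_scope P ++ S_IPET f extra ++ S_merge q f r').

Definition T' (C R X : Type) (q : qprog C R) (T : theory C R X)
    (r' : fol C R -> X) : theory C R X :=
  Theory (th_Phi T ++ Psi q) r'.

Definition g_witness (C R X : Type) (G : wcfg) (f : cfg_V G * cfg_V G -> X)
    (M : pmodel C R X) : \bar Rdefinitions.R :=
  ereal_sup [set ((g_IPET f k)%:~R)%:E | k in [set k | sat k (pm_scope M)]].

Definition DS (C R X : Type) (q : qprog C R) (G : wcfg)
    (f : cfg_V G * cfg_V G -> X) (extra : lsys X) (T : theory C R X)
    (r' : fol C R -> X) (P : pmodel C R X) : \bar Rdefinitions.R :=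
  ereal_sup [set g_witness f M | M in solutions (P' q f extra r' P) (T' q T r')].

Definition wg_setup (C R X : Type) (q : qprog C R) (G : wcfg)
    (f : cfg_V G * cfg_V G -> X) (T : theory C R X) (r' : fol C R -> X) : Prop :=
  [/\ (forall v, List.In (cfg_tr G v) (blocks q)),
      {in cfg_E G &, injective f},
      (forall e phi, e \in cfg_E G -> List.In phi (th_Phi T) -> f e <> th_r T phi)
    & (forall phi, List.In phi (th_Phi T) -> ~ List.In phi (Psi q) ->
          r' phi = th_r T phi)] /\
  [/\ (forall p1 p2, List.In p1 (Psi q) -> List.In p2 (Psi q) -> r' p1 = r' p2 -> p1 = p2),
      (forall p e, List.In p (Psi q) -> e \in cfg_E G -> r' p <> f e)
    & (forall p phi, List.In p (Psi q) -> List.In phi (th_Phi T) -> r' p <> th_r T phi)].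

Definition scope_fresh (C R X : Type) (q : qprog C R) (G : wcfg)
    (f : cfg_V G * cfg_V G -> X) (r' : fol C R -> X) (S : lsys X) : Prop :=
  (forall e, e \in cfg_E G -> ~ List.In (f e) (vars S)) /\
  (forall p, List.In p (Psi q) -> ~ List.In (r' p) (vars S)).

From HB Require Import structures.
From mathcomp Require Import all_boot all_order all_algebra.
From mathcomp Require Import all_classical all_reals Rstruct.
From mathcomp Require Import ereal.
Local Open Scope ereal_scope.
Local Open Scope classical_set_scope.

(* Witness generation adds the same constraints S_IPET and S_merge to the
   scopes of P and Q, so an abstraction witnessing P >= Q also witnesses
   P' >= Q'.  Refinement is transitive, hence every solution of (Q', T') is
   a solution of (P', T'), and DS(Q) is a supremum over a subset of the set
   whose supremum is DS(P). *)

Lemma info_le_trans a b c : info_le a b -> info_le b c -> info_le a c.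
Proof. by move=> [->|->]; [left|]. Qed.

Lemma refines_trans (C R X : Type) (P Q M : pmodel C R X) :
  refines P Q -> refines Q M -> refines P M.
Proof.
move=> [a1 [[h1 h2 h3 h4 h5] e1]] [a2 [[g1 g2 g3 g4 g5] e2]].
exists (a1 \o a2); split; last by move=> k /e2 /e1.
split=> /=.
- by move=> c m; apply: info_le_trans (h1 c (a2 m)) (g1 c m).
- by move=> r m1 m2; apply: info_le_trans (h2 r (a2 m1) (a2 m2)) (g2 r m1 m2).
- by move=> m; apply: info_le_trans (h3 (a2 m)) (g3 m).
- by move=> m1 m2; apply: info_le_trans (h4 (a2 m1) (a2 m2)) (g4 m1 m2).
- move=> p /[dup] ex_p /h5 [q0 a1q0].
  have ex_q0 : pm_ex Q q0 = T1 by case: (h3 q0); rewrite a1q0 ex_p // => ->.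
  by have [m a2m] := g5 _ ex_q0; exists m; rewrite /= a2m.
Qed.

Lemma entails_cat2r (X : Type) (S1 S2 S : lsys X) :
  entails S1 S2 -> entails (S1 ++ S) (S2 ++ S).
Proof.
move=> S12 k k_sat i /(List.in_app_or S2 S i) [i_in | i_in].
- apply: (S12 k _ i i_in) => j j_in.
  by apply: k_sat; apply: List.in_or_app; left.
- by apply: k_sat; apply: List.in_or_app; right.
Qed.

Lemma refines_P' (C R X : Type) (q : qprog C R) (G : wcfg)
    (f : cfg_V G * cfg_V G -> X) (extra : lsys X) (r' : fol C R -> X)
    (P Q : pmodel C R X) :
  refines P Q -> refines (P' q f extra r' P) (P' q f extra r' Q).
Proof. by case=> abs [abs_info entQP]; exists abs; split; last exact: entails_cat2r. Qed.

Lemma refines_solutions_sub (C R X : Type) (P Q : pmodel C R X)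
    (T : theory C R X) :
  refines P Q -> solutions Q T `<=` solutions P T.
Proof. by move=> PQ M [M_concrete QM M_compat]; split=> //; apply: refines_trans QM. Qed.

Lemma le_DS_refines (C R X : Type) (q : qprog C R) (G : wcfg)
    (f : cfg_V G * cfg_V G -> X) (extra : lsys X) (T : theory C R X)
    (r' : fol C R -> X) (P Q : pmodel C R X) :
  refines P Q -> DS q f extra T r' Q <= DS q f extra T r' P.
Proof.
by move=> PQ; apply/le_ereal_sup/image_subset/refines_solutions_sub/refines_P'.
Qed.

Theorem proposition5p6
  (C R : Type) (X : finType)
  (q : qprog C R) (G : wcfg) (f : cfg_V G * cfg_V G -> X) (extra : lsys X)
  (T : theory C R X) (r' : fol C R -> X) :
  query_program q ->
  wg_setup q f T r' ->
  (forall P Q : pmodel C R X,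
     scope_fresh q f r' (pm_scope P) -> scope_fresh q f r' (pm_scope Q) ->
     refines P Q ->
     DS q f extra T r' Q <= DS q f extra T r' P)
  /\
  (forall Q : pmodel C R X,
     scope_fresh q f r' (pm_scope Q) ->
     refines (@P_init C R X) Q ->
     DS q f extra T r' Q <= DS q f extra T r' (@P_init C R X)).
Proof.
move=> _ _; split=> [P Q _ _ | Q _]; exact: le_DS_refines.
Qed.
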